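(* Let $f_1,f_2\in S_3$ be linearly independent. Then $\dim\big(\pi_{1,2}P_\xi([f_1,f_2])\big)=2$ for almost every $\xi\in\mathbb{R}^2$.
   Context: For $j\ge0$, $S_j$ is the real vector space of homogeneous polynomials of degree $j$ in the variables $r,s$ (so $S_0=[1]$, $S_1=[r,s]$, $S_2=[r^2,rs,s^2]$, $S_3=[r^3,r^2s,rs^2,s^3]$); $[\cdot]$ denotes linear span. For $\xi=(a,b)\in\mathbb{R}^2$ and a polynomial $f$, $P_\xi f$ is the second-order Taylor polynomial of $f$ at $\xi$: $P_\xi f(r,s)=f(\xi)+\partial_rf(\xi)(r-a)+\partial_sf(\xi)(s-b)+\frac12\partial_{rr}f(\xi)(r-a)^2+\partial_{rs}f(\xi)(r-a)(s-b)+\frac12\partial_{ss}f(\xi)(s-b)^2\in S_0\oplus S_1\oplus S_2$. $\pi_{1,2}$ is the projection of $S_0\oplus S_1\oplus S_2$ onto $S_1\oplus S_2$ along $S_0$. *)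

From HB Require Import structures.
From mathcomp Require Import all_boot all_order all_algebra.
From mathcomp Require Import all_classical all_reals all_analysis.
Set Implicit Arguments. Unset Strict Implicit. Unset Printing Implicit Defensive.
Import Order.TTheory GRing.Theory Num.Theory.
Local Open Scope ring_scope.

(* Real polynomials in the two variables r, s, represented as {poly {poly R}}:
   the outer indeterminate is s, the inner one (in the coefficients) is r. *)
Definition bipoly (R : realType) := {poly {poly R}}.

Section Bipoly.
Variable R : realType.

Definition cst (c : R) : bipoly R := c%:P%:P.
Definition var_r : bipoly R := ('X : {poly R})%:P.
Definition var_s : bipoly R := 'X.

Definition eval2 (p : bipoly R) (a b : R) : R := (p.[b%:P]).[a].

Definition dr (p : bipoly R) : bipoly R := map_poly (fun q : {poly R} => q^`()) p.
Definition ds (p : bipoly R) : bipoly R := p^`().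

Definition inS3 (f : bipoly R) : Prop :=
  exists c : 'I_4 -> R,
    f = \sum_(i < 4) cst (c i) * var_r ^+ (3 - i) * var_s ^+ i.

Definition taylor2 (a b : R) (f : bipoly R) : bipoly R :=
  cst (eval2 f a b)
  + cst (eval2 (dr f) a b) * (var_r - cst a)
  + cst (eval2 (ds f) a b) * (var_s - cst b)
  + cst (2^-1 * eval2 (dr (dr f)) a b) * (var_r - cst a) ^+ 2
  + cst (eval2 (dr (ds f)) a b) * ((var_r - cst a) * (var_s - cst b))
  + cst (2^-1 * eval2 (ds (ds f)) a b) * (var_s - cst b) ^+ 2.

(* pi_{1,2}: projection of S_0 + S_1 + S_2 onto S_1 + S_2 along S_0,
   i.e. removal of the constant term *)
Definition pi12 (p : bipoly R) : bipoly R := p - cst (p`_0`_0).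

(* g1, g2 are linearly independent over R, i.e. dim [g1, g2] = 2 *)
Definition lin_indep2 (g1 g2 : bipoly R) : Prop :=
  forall al be : R, cst al * g1 + cst be * g2 = 0 -> al = 0 /\ be = 0.

End Bipoly.

(* For a cubic f, the quadratic part of P_xi f is the Hessian of f at xi (halved
   on the diagonal). So if pi12 P_xi f1 and pi12 P_xi f2 are dependent, the rows
   (f_rr, f_rs, f_ss) of f1 and f2 at xi are proportional, and the sum of the
   squares of their 2x2 minors, a polynomial in xi, vanishes at xi. This
   polynomial is nonzero: otherwise its values at (1,0), (0,1) and (1,1) force
   all 2x2 minors of the coefficient vectors of f1 and f2 to vanish, which makes
   f1 and f2 dependent. Finally, the zero set of a nonzero polynomial in two
   variables is Lebesgue-null by Fubini, since almost all of its vertical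
   sections are finite. *)
From Pilot Require Import Defs.
From HB Require Import structures.
From mathcomp Require Import all_boot all_order all_algebra.
From mathcomp Require Import all_classical all_reals all_analysis.
From mathcomp Require Import ring lra measurable_realfun.
Set Implicit Arguments. Unset Strict Implicit. Unset Printing Implicit Defensive.
Import Order.TTheory GRing.Theory Num.Theory.
Local Open Scope ring_scope.
Local Open Scope classical_set_scope.
Local Notation cst := Defs.cst.

Lemma dependent_det2_eq0 (F : idomainType) (al be x1 x2 y1 y2 : F) :
  (al, be) != (0, 0) -> al * x1 + be * x2 = 0 -> al * y1 + be * y2 = 0 ->
  x1 * y2 - y1 * x2 = 0.
Proof.
move=> nz ex ey.
have /eqP : al * (x1 * y2 - y1 * x2) = 0.
  by rewrite (_ : _ * _ = (al * x1 + be * x2) * y2 - (al * y1 + be * y2) * x2);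
    [rewrite ex ey; ring|ring].
have /eqP : be * (x1 * y2 - y1 * x2) = 0.
  by rewrite (_ : _ * _ = (al * y1 + be * y2) * x1 - (al * x1 + be * x2) * y1);
    [rewrite ex ey; ring|ring].
rewrite !mulf_eq0 => /orP[/eqP b0|/eqP //] /orP[/eqP a0|/eqP //].
by move: nz; rewrite a0 b0 eqxx.
Qed.

Lemma dependent_of_minors_eq0 (F : comNzRingType) n (c d : 'I_n -> F) :
  (forall i j, c i * d j = c j * d i) ->
  exists2 ab : F * F, ab != (0, 0) & forall i, ab.1 * c i + ab.2 * d i = 0.
Proof.
move=> cd; have [/forallP c0|/forallPn [i ci]] := boolP [forall i, c i == 0].
  exists (1, 0) => [|i /=]; first by rewrite xpair_eqE oner_eq0.
  by rewrite (eqP (c0 i)) mulr0 mul0r addr0.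
exists (d i, - c i) => [|j /=]; first by rewrite xpair_eqE oppr_eq0 (negbTE ci) andbF.
by rewrite mulNr cd mulrC subrr.
Qed.

Lemma sqr_sum3_eq0 (F : realDomainType) (x y z : F) :
  x ^+ 2 + y ^+ 2 + z ^+ 2 = 0 -> [/\ x = 0, y = 0 & z = 0].
Proof.
move/eqP; rewrite !paddr_eq0 ?addr_ge0 ?sqr_ge0 // !sqrf_eq0.
by case/andP => /andP[/eqP -> /eqP ->] /eqP ->.
Qed.

Lemma finite_roots (F : idomainType) (p : {poly F}) :
  p != 0 -> finite_set [set x | root p x].
Proof.
move=> p0; apply: contrapT => /(infinite_set_fset (size p)) [B sBp leB].
have rootsB : all (root p) (finmap.enum_fset B) by apply/allP => x /sBp.
by have := max_poly_roots p0 rootsB (finmap.fset_uniq B); rewrite ltnNge leB.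
Qed.

Section Bipoly.
Variable R : realType.
Implicit Types (f g p q : bipoly R) (a b x : R).

Local Notation leb2 := ((@lebesgue_measure R) \x (@lebesgue_measure R))%E.

Lemma eval2D p q a b : eval2 (p + q) a b = eval2 p a b + eval2 q a b.
Proof. by rewrite /eval2 !hornerE. Qed.

Lemma eval2N p a b : eval2 (- p) a b = - eval2 p a b.
Proof. by rewrite /eval2 !hornerE. Qed.

Lemma eval2M p q a b : eval2 (p * q) a b = eval2 p a b * eval2 q a b.
Proof. by rewrite /eval2 !hornerE. Qed.

Lemma eval2X p n a b : eval2 (p ^+ n) a b = eval2 p a b ^+ n.
Proof. by rewrite /eval2 !hornerE. Qed.

Lemma eval2_map p a b : eval2 p a b = (map_poly (horner_eval a) p).[b].
Proof. by rewrite -[in RHS](hornerC b a) horner_map. Qed.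

Lemma drD p q : dr (p + q) = dr p + dr q.
Proof. by apply/polyP => i; rewrite !(coefD, coef_map_id0) ?deriv0 // derivD. Qed.

Lemma drM p q : dr (p * q) = dr p * q + p * dr q.
Proof.
apply/polyP => i; rewrite coefD !coefM coef_map_id0 ?deriv0 // coefM.
rewrite raddf_sum -big_split /=; apply: eq_bigr => j _.
by rewrite derivM !coef_map_id0 ?deriv0.
Qed.

Lemma dr_cst x : dr (cst x) = 0.
Proof. by rewrite /dr /cst map_polyC /= derivC. Qed.

Lemma drX p n : dr (p ^+ n) = (dr p * p ^+ n.-1) *+ n.
Proof.
elim: n => [|n IH]; first by rewrite expr0 mulr0n -(rmorph1 (polyC \o polyC)) dr_cst.
rewrite exprS drM IH /=; case: n {IH} => [|n]; first by rewrite mulr0n mulr0 addr0.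
by rewrite mulrnAr exprS mulrCA -mulrS.
Qed.

Lemma dr_var_r : dr (var_r R) = 1.
Proof. by rewrite /dr /var_r map_polyC /= derivX. Qed.

Lemma dr_var_s : dr (var_s R) = 0.
Proof.
apply/polyP => i; rewrite coef_map_id0 ?deriv0 // coefX coef0.
by case: eqP; rewrite ?mulr0n ?deriv0 // -polyC1 derivC.
Qed.

Lemma dsD p q : ds (p + q) = ds p + ds q.
Proof. exact: derivD. Qed.

Definition mono x k j : bipoly R := cst x * var_r R ^+ k * var_s R ^+ j.

Lemma dr_mono x k j : dr (mono x k j) = mono (x *+ k) k.-1 j.
Proof. by rewrite /mono !drM !drX dr_cst dr_var_r dr_var_s /cst; ring. Qed.

Lemma ds_mono x k j : ds (mono x k j) = mono (x *+ j) k j.-1.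
Proof.
by rewrite /mono /ds !derivM !deriv_exp /cst /var_r /var_s !derivC derivX; ring.
Qed.

Lemma eval2_mono x k j a b : eval2 (mono x k j) a b = x * a ^+ k * b ^+ j.
Proof. by rewrite /eval2 /mono /cst /var_r /var_s !hornerE. Qed.

Lemma coef_mono x k j i l : (mono x k j)`_i`_l = x *+ ((i == j) && (l == k)).
Proof.
rewrite /mono /cst /var_r /var_s -!rmorphXn -!rmorphM coefMXn.
case: ltnP => [ij|ji]; first by rewrite coef0 (ltn_eqF ij).
have [->|ij] := eqVneq i j; first by rewrite subnn coefC coefCM coefXn mulr_natr.
by rewrite coefC subn_eq0 leqNgt ltn_neqAle eq_sym ij ji coef0.
Qed.

Lemma coef_pi12 p i l : (i, l) != (0, 0)%N -> (pi12 p)`_i`_l = p`_i`_l.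
Proof.
rewrite xpair_eqE /pi12 /cst !coefB coefC.
by case: i => [|i] /= nz; rewrite coefC ?(negbTE nz) ?if_same subr0.
Qed.

Lemma coef_lincomb_pi12_eq0 al be p q i l :
  cst al * pi12 p + cst be * pi12 q = 0 -> (i, l) != (0, 0)%N ->
  al * p`_i`_l + be * q`_i`_l = 0.
Proof.
move=> comb il; move/(congr1 (fun r : bipoly R => r`_i`_l)): comb.
by rewrite /= coefD !coefCM coefD !coefCM !coef0 !(coef_pi12 _ il).
Qed.

Lemma coef2_taylor2 a b f :
  [/\ (taylor2 a b f)`_0`_2 = 2^-1 * eval2 (dr (dr f)) a b,
      (taylor2 a b f)`_1`_1 = eval2 (dr (ds f)) a b &
      (taylor2 a b f)`_2`_0 = 2^-1 * eval2 (ds (ds f)) a b].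
Proof.
rewrite /taylor2; move: (eval2 f a b) (eval2 (dr f) a b) (eval2 (ds f) a b).
move: (2^-1 * eval2 (dr (dr f)) a b) (eval2 (dr (ds f)) a b).
move: (2^-1 * eval2 (ds (ds f)) a b) => e5 e3 e4 e0 e1 e2.
have -> : cst e0 + cst e1 * (var_r R - cst a) + cst e2 * (var_s R - cst b)
    + cst e3 * (var_r R - cst a) ^+ 2 + cst e4 * ((var_r R - cst a) * (var_s R - cst b))
    + cst e5 * (var_s R - cst b) ^+ 2 =
  mono (e0 - e1 * a - e2 * b + e3 * a ^+ 2 + e4 * a * b + e5 * b ^+ 2) 0 0
  + mono (e1 - 2 * e3 * a - e4 * b) 1 0 + mono (e2 - e4 * a - 2 * e5 * b) 0 1
  + mono e3 2 0 + mono e4 1 1 + mono e5 0 2.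
  by rewrite /mono /cst; ring.
by rewrite !coefD !coef_mono /= !(mulr0n, mulr1n, addr0, add0r).
Qed.

Definition hessian_gap f g : bipoly R :=
  (dr (dr f) * dr (ds g) - dr (ds f) * dr (dr g)) ^+ 2
  + (dr (dr f) * ds (ds g) - ds (ds f) * dr (dr g)) ^+ 2
  + (dr (ds f) * ds (ds g) - ds (ds f) * dr (ds g)) ^+ 2.

Lemma eval2_hessian_gap f g a b x1 y1 z1 x2 y2 z2 :
  eval2 (dr (dr f)) a b = x1 -> eval2 (dr (ds f)) a b = y1 ->
  eval2 (ds (ds f)) a b = z1 -> eval2 (dr (dr g)) a b = x2 ->
  eval2 (dr (ds g)) a b = y2 -> eval2 (ds (ds g)) a b = z2 ->
  eval2 (hessian_gap f g) a b =
  (x1 * y2 - y1 * x2) ^+ 2 + (x1 * z2 - z1 * x2) ^+ 2 + (y1 * z2 - z1 * y2) ^+ 2.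
Proof.
by move=> <- <- <- <- <- <-; rewrite /hessian_gap !(eval2D, eval2N, eval2M, eval2X).
Qed.

Lemma hessian_gap_eq0_of_dependent a b f g :
  ~ lin_indep2 (pi12 (taylor2 a b f)) (pi12 (taylor2 a b g)) ->
  eval2 (hessian_gap f g) a b = 0.
Proof.
move=> dep.
have [al [be [comb nz]]] : exists al be, cst al * pi12 (taylor2 a b f)
    + cst be * pi12 (taylor2 a b g) = 0 /\ (al, be) != (0, 0).
  apply: contrapT => indep; apply: dep => al be comb; apply: contrapT => nz.
  apply: indep; exists al, be; split => //.
  by apply/negP; rewrite xpair_eqE => /andP[/eqP a0 /eqP b0]; apply: nz.
have coef_comb := coef_lincomb_pi12_eq0 comb.
have [fx fy fz] := coef2_taylor2 a b f.
have [gx gy gz] := coef2_taylor2 a b g.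
have := coef_comb 0%N 2%N isT; have := coef_comb 1%N 1%N isT.
have := coef_comb 2%N 0%N isT; rewrite fx fy fz gx gy gz => ez ey ex.
have {}ex : al * eval2 (dr (dr f)) a b + be * eval2 (dr (dr g)) a b = 0 by lra.
have {}ez : al * eval2 (ds (ds f)) a b + be * eval2 (ds (ds g)) a b = 0 by lra.
rewrite (eval2_hessian_gap erefl erefl erefl erefl erefl erefl).
rewrite (dependent_det2_eq0 nz ex ey) (dependent_det2_eq0 nz ex ez).
by rewrite (dependent_det2_eq0 nz ey ez) expr0n !addr0.
Qed.

Definition cubic (c : 'I_4 -> R) : bipoly R :=
  \sum_(i < 4) cst (c i) * var_r R ^+ (3 - i) * var_s R ^+ i.

Lemma cubicE c : cubic c = mono (c (inord 0)) 3 0 + mono (c (inord 1)) 2 1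
  + mono (c (inord 2)) 1 2 + mono (c (inord 3)) 0 3.
Proof.
rewrite /cubic (eq_bigr (fun i : 'I_4 => mono (c (inord i)) (3 - i) i)); last first.
  by move=> i _; rewrite inord_val.
rewrite -(big_mkord xpredT (fun i => mono (c (inord i)) (3 - i) i)).
by rewrite !big_nat_recl // big_geq // addr0 !addrA.
Qed.

Lemma eval2_drr_cubic c a b :
  eval2 (dr (dr (cubic c))) a b = 6 * c (inord 0) * a + 2 * c (inord 1) * b.
Proof. by rewrite cubicE !(drD, dr_mono) !eval2D !eval2_mono /=; ring. Qed.

Lemma eval2_drs_cubic c a b :
  eval2 (dr (ds (cubic c))) a b = 2 * c (inord 1) * a + 2 * c (inord 2) * b.
Proof.
by rewrite cubicE !(dsD, ds_mono) !(drD, dr_mono) !eval2D !eval2_mono /=; ring.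
Qed.

Lemma eval2_dss_cubic c a b :
  eval2 (ds (ds (cubic c))) a b = 2 * c (inord 2) * a + 6 * c (inord 3) * b.
Proof. by rewrite cubicE !(dsD, ds_mono) !eval2D !eval2_mono /=; ring. Qed.

Lemma cubic_lincomb_eq0 al be c d : (forall i, al * c i + be * d i = 0) ->
  cst al * cubic c + cst be * cubic d = 0.
Proof.
move=> comb; rewrite /cubic !mulr_sumr -big_split big1 // => i _ /=.
transitivity (cst (al * c i + be * d i) * var_r R ^+ (3 - i) * var_s R ^+ i).
  by rewrite /cst; ring.
by rewrite comb /cst !rmorph0 !mul0r.
Qed.

Lemma hessian_gap_cubic_neq0 c d :
  lin_indep2 (cubic c) (cubic d) -> hessian_gap (cubic c) (cubic d) != 0.
Proof.
move=> indep; apply/eqP => gap0.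
have gap_at a b : eval2 (hessian_gap (cubic c) (cubic d)) a b = 0.
  by rewrite gap0 /eval2 !horner0.
have minors0 a b := sqr_sum3_eq0 (etrans (esym (eval2_hessian_gap
  (eval2_drr_cubic c a b) (eval2_drs_cubic c a b) (eval2_dss_cubic c a b)
  (eval2_drr_cubic d a b) (eval2_drs_cubic d a b) (eval2_dss_cubic d a b)))
  (gap_at a b)).
have [m1 m2 m3] := minors0 1 0; have [m4 m5 m6] := minors0 0 1.
have [m7 m8 m9] := minors0 1 1.
(* At (1,0) and (0,1) the minors are multiples of single c i * d j - c j * d i;
   at (1,1) the remaining one, for (i, j) = (0, 3), appears. *)
have minors_cd (i j : 'I_4) : c i * d j = c j * d i.
  rewrite -(inord_val i) -(inord_val j).
  by case: i j => [[|[|[|[|//]]]] ?] [[|[|[|[|//]]]] ?] /=; lra.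
have [[al be] /= nz comb] := dependent_of_minors_eq0 minors_cd.
have [a0 b0] := indep al be (cubic_lincomb_eq0 comb).
by move: nz; rewrite a0 b0 eqxx.
Qed.

Lemma measurable_eval2 p :
  measurable_fun setT (fun xi : R * R => eval2 p xi.1 xi.2).
Proof.
elim/poly_ind: p => [|p q IH].
  have -> : (fun xi : R * R => eval2 0 xi.1 xi.2) = fun=> 0.
    by apply/funext => xi; rewrite /eval2 !horner0.
  exact: measurable_cst.
have -> : (fun xi : R * R => eval2 (p * 'X + q%:P) xi.1 xi.2) =
    (fun xi => eval2 p xi.1 xi.2 * xi.2 + q.[xi.1]).
  by apply/funext => xi; rewrite /eval2 !hornerE.
apply: measurable_funD; first exact: measurable_funM.
by apply: measurableT_comp; [exact: measurable_poly|exact: measurable_fst].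
Qed.

Lemma negligible_eval2_eq0 p : p != 0 ->
  leb2.-negligible [set xi : R * R | eval2 p xi.1 xi.2 = 0].
Proof.
move=> p0; set Z := [set xi | _].
set B := [set x : R | root (lead_coef p) x].
pose N := B `*` [set: R].
have finB : finite_set B by apply: finite_roots; rewrite lead_coef_eq0.
have mB : measurable B.
  by apply: countable_measurable; [exact: measurable_set1|exact: finite_set_countable].
have mZ : measurable Z.
  by have := measurable_eval2 p measurableT (measurable_set1 0); rewrite setTI.
have mN : measurable N by apply: measurableX.
apply: (@negligibleS _ _ _ leb2 (N `|` (Z `\` N))).
  by move=> xi Zxi; have [Nxi|nNxi] := pselect (N xi); [left|right].
apply: negligibleU.
  exists N; split => //.
  have leb2N := product_measure1E (@lebesgue_measure R) (@lebesgue_measure R) mB measurableT.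
  apply: (eq_trans leb2N).
  rewrite [X in (X * _)%E](_ : _ = 0%E) ?mul0e //.
  exact/countable_lebesgue_measure0/finite_set_countable.
exists (Z `\` N); split => //; first exact: measurableD.
(* Outside the finitely many roots of the leading coefficient of p, the vertical
   section of Z is the zero set of a nonzero polynomial, hence finite. *)
apply: integral0_eq => x _ /=; rewrite xsectionD.
have [Bx|nBx] := pselect (B x); first by rewrite in_xsectionX ?inE // setDT measure0.
apply/countable_lebesgue_measure0/finite_set_countable/finite_setD.
have px0 : map_poly (horner_eval x) p != 0.
  by rewrite -lead_coef_eq0 lead_coef_map_eq; apply/negP.
apply: sub_finite_set (finite_roots px0) => y /=.
by rewrite /xsection /= inE /Z /= eval2_map => /eqP.
Qed.

End Bipoly.

Theorem lemma7p2 (R : realType) (f1 f2 : bipoly R) :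
  inS3 f1 -> inS3 f2 -> lin_indep2 f1 f2 ->
  ((@lebesgue_measure R) \x (@lebesgue_measure R))%E.-negligible
    [set xi : R * R |
      ~ lin_indep2 (pi12 (taylor2 xi.1 xi.2 f1)) (pi12 (taylor2 xi.1 xi.2 f2))].
Proof.
move=> [c ->] [d ->] indep.
apply: negligibleS (negligible_eval2_eq0 (hessian_gap_cubic_neq0 indep)).
by move=> -[a b] /=; exact: hessian_gap_eq0_of_dependent.
Qed.
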